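(* Let $\Sigma=(X,\mathcal{S},\phi)$ be a forward complete dynamical system. Let $t_1>0$, $G_0>0$, and let $\beta$ be a function of class $\mathcal{K}_\infty$ such that $\limsup_{r\downarrow 0}\frac{\beta(r)}{r}<+\infty$ and $$\|\phi(t,x,\sigma)\|\le G_0\,\beta(\|x\|)\quad \text{for all } t\in[0,t_1],\ x\in X,\ \sigma\in\mathcal{S}.$$ Then the following statements are equivalent: (i) $\Sigma$ is ULES; (ii) for every $p>0$ there exist a nondecreasing function $k:\mathbb{R}_+\to\mathbb{R}_+$ and $R>0$ such that $$\int_0^{+\infty}\|\phi(t,x,\sigma)\|^p\,dt\le k(\|x\|)^p\|x\|^p\quad\text{for all } x\in B_X(0,R),\ \sigma\in\mathcal{S};$$ (iii) there exist $p>0$, a nondecreasing function $k:\mathbb{R}_+\to\mathbb{R}_+$, and $R>0$ such that the inequality in (ii) holds for all $x\in B_X(0,R)$ and $\sigma\in\mathcal{S}$.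
   Context: $(X,\|\cdot\|)$ is a Banach space and $B_X(x,r)$ denotes the closed ball of center $x$ and radius $r$. A function $\alpha:\mathbb{R}_+\to\mathbb{R}_+$ is of class $\mathcal{K}$ if it is continuous, increasing and $\alpha(0)=0$; of class $\mathcal{K}_\infty$ if moreover unbounded. Let $\mathcal{Q}$ be a nonempty set and $\mathcal{S}$ a set of functions $\sigma:\mathbb{R}_+\to\mathcal{Q}$ which is closed by time-shift (for $\sigma\in\mathcal{S}$, $\tau\ge0$, the function $\mathbb{T}_\tau\sigma:s\mapsto\sigma(\tau+s)$ is in $\mathcal{S}$) and closed by concatenation (for $\sigma_1,\sigma_2\in\mathcal{S}$, $\tau>0$, the function equal to $\sigma_1$ on $[0,\tau]$ and with $\sigma(\tau+t)=\sigma_2(t)$ for $t>0$ is in $\mathcal{S}$). A triple $\Sigma=(X,\mathcal{S},\phi)$ with $\phi:\mathbb{R}_+\times X\times\mathcal{S}\to X$ is a forward complete dynamical system if: (i) $\phi(0,x,\sigma)=x$; (ii) if $\tilde\sigma=\sigma$ on $[0,t]$ then $\phi(t,x,\tilde\sigma)=\phi(t,x,\sigma)$; (iii) $t\mapsto\phi(t,x,\sigma)$ is continuous; (iv) $\phi(\tau,\phi(t,x,\sigma),\mathbb{T}_t\sigma)=\phi(t+\tau,x,\sigma)$ for all $t,\tau\ge0$, $x\in X$, $\sigma\in\mathcal{S}$. $\Sigma$ is uniformly locally exponentially stable at the origin (ULES) if there exist $R,M,\lambda>0$ such that $\|\phi(t,x,\sigma)\|\le Me^{-\lambda t}\|x\|$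 for all $t\ge0$, $x\in B_X(0,R)$, $\sigma\in\mathcal{S}$. *)

From HB Require Import structures.
From mathcomp Require Import all_boot all_order all_algebra.
From mathcomp Require Import all_classical all_reals all_analysis.
Set Implicit Arguments. Unset Strict Implicit. Unset Printing Implicit Defensive.
Import Order.TTheory GRing.Theory Num.Theory.
Import numFieldNormedType.Exports.
Local Open Scope classical_set_scope.
Local Open Scope ring_scope.

(* Signals sigma : R_+ -> Q are modelled as functions R -> Q whose values at
   negative times are irrelevant. *)

Definition tshift (R : realType) (Q : Type) (tau : R) (sigma : R -> Q) : R -> Q :=
  fun s => sigma (tau + s).

Definition concat (R : realType) (Q : Type) (sigma1 sigma2 : R -> Q) (tau : R)
  : R -> Q := fun t => if t <= tau then sigma1 t else sigma2 (t - tau).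

Definition shift_closed (R : realType) (Q : Type) (S : set (R -> Q)) : Prop :=
  forall sigma tau, S sigma -> 0 <= tau -> S (tshift tau sigma).

Definition concat_closed (R : realType) (Q : Type) (S : set (R -> Q)) : Prop :=
  forall sigma1 sigma2 tau, S sigma1 -> S sigma2 -> 0 < tau ->
    exists2 s', S s' & forall t, 0 <= t -> s' t = concat sigma1 sigma2 tau t.

Definition fc_dynamical_system (R : realType) (X : normedModType R) (Q : Type)
  (S : set (R -> Q)) (phi : R -> X -> (R -> Q) -> X) : Prop :=
  [/\ forall x sigma, S sigma -> phi 0 x sigma = x,
      forall t x sigma sigma', 0 <= t -> S sigma -> S sigma' ->
        (forall s, 0 <= s <= t -> sigma' s = sigma s) ->
        phi t x sigma' = phi t x sigma,
      forall x sigma, S sigma ->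
        {within `[0, +oo[, continuous (fun t => phi t x sigma)} &
      forall t tau x sigma, 0 <= t -> 0 <= tau -> S sigma ->
        phi tau (phi t x sigma) (tshift t sigma) = phi (t + tau) x sigma].

Definition ULES (R : realType) (X : normedModType R) (Q : Type)
  (S : set (R -> Q)) (phi : R -> X -> (R -> Q) -> X) : Prop :=
  exists Rad M lam : R, [/\ 0 < Rad, 0 < M, 0 < lam &
    forall t x sigma, 0 <= t -> `|x| <= Rad -> S sigma ->
      `|phi t x sigma| <= M * expR (- lam * t) * `|x| ].

Definition class_Kinf (R : realType) (beta : R -> R) : Prop :=
  [/\ {within `[0, +oo[, continuous beta},
      forall r s, 0 <= r -> r < s -> beta r < beta s,
      beta 0 = 0,
      forall r, 0 <= r -> 0 <= beta r &
      forall M, exists2 r, 0 <= r & M < beta r].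

Definition limsup_ratio_finite (R : realType) (beta : R -> R) : Prop :=
  exists C delta : R, 0 < delta /\ forall r, 0 < r < delta -> beta r / r <= C.

Definition nondecr_nonneg (R : realType) (k : R -> R) : Prop :=
  (forall r, 0 <= r -> 0 <= k r) /\
  (forall r s, 0 <= r -> r <= s -> k r <= k s).

Definition Lp_bound (R : realType) (X : normedModType R) (Q : Type)
  (phi : R -> X -> (R -> Q) -> X) (p : R) (k : R -> R) (x : X) (sigma : R -> Q)
  : Prop :=
  (\int[lebesgue_measure]_(t in `[0%R, +oo[) ((`|phi t x sigma| `^ p)%:E)
     <= ((k `|x|) `^ p * `|x| `^ p)%:E)%E.

From HB Require Import structures.
From mathcomp Require Import all_boot all_order all_algebra.
From mathcomp Require Import all_classical all_reals all_analysis.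
From mathcomp Require Import measurable_realfun exponential_distribution.
From mathcomp Require Import ring.
Import Order.TTheory GRing.Theory Num.Theory.
Import numFieldNormedType.Exports.
Local Open Scope classical_set_scope.
Local Open Scope ring_scope.

(* (i) => (ii): the p-th power of an exponential bound is a multiple of an
   exponential density, whose integral is known.
   (iii) => (i): a bound on the integral of |phi|^p forces the trajectory to be
   small at some instant of every time window of given length.  Near the
   origin the short-time bound G0 beta(|x|) is linear in |x|, so from such an
   instant it controls the trajectory for t1 more time units.  This gives first
   uniform stability |phi t x| <= K |x|, then a contraction |phi T x| <= |x| / e
   at a fixed time T, and iterating the contraction through the cocycle
   property yields exponential decay at rate 1/T. *)

Lemma within_continuous_norm {R : realType} {X : normedModType R}
    {A : set R} {f : R -> X} :
  {within A, continuous f} -> {within A, continuous (fun t => `|f t|)}.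
Proof. by move=> cf t; apply: continuous_comp; [exact: cf | exact: norm_continuous]. Qed.

Lemma measurable_powR_norm {R : realType} {X : normedModType R}
    {A : set R} {f : R -> X} (p : R) :
  measurable A -> {within A, continuous f} ->
  measurable_fun A (fun t => (`|f t| `^ p)%:E).
Proof.
move=> mA cf; apply/measurable_EFinP.
apply: (measurableT_comp (f := (@powR R)^~ p)); first exact: measurable_powR.
apply: subspace_continuous_measurable_fun => //.
exact: within_continuous_norm.
Qed.

Lemma le_root_of_powR_mul_le {R : realType} {p L g c : R} :
  0 < p -> 0 < L -> 0 <= g -> 0 <= c ->
  g `^ p * L <= c `^ p -> g <= c * L `^ (- p^-1).
Proof.
move=> p0 L0 g0 c0; rewrite -ler_pdivlMr // => gp.
have root_powR (y : R) : 0 <= y -> (y `^ p) `^ p^-1 = y.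
  by move=> y0; rewrite -powRrM divff ?gt_eqF // powRr1.
rewrite -(root_powR g) //.
apply: le_trans (ge0_ler_powR _ _ _ gp) _.
- by rewrite invr_ge0 ltW.
- by rewrite nnegrE powR_ge0.
- by rewrite nnegrE divr_ge0 ?powR_ge0 ?(ltW L0).
rewrite powRM ?powR_ge0 ?invr_ge0 ?(ltW L0) // root_powR //.
by rewrite -(powR_inv1 (ltW L0)) -powRrM mulN1r.
Qed.

(* The minimum of |f|^p over the window, times its length, is below the integral. *)
Lemma Lp_integral_small_in_window {R : realType} {X : normedModType R}
    {f : R -> X} {p c : R} (a L : R) :
  0 < p -> 0 <= a -> 0 < L -> 0 <= c ->
  {within `[0, +oo[, continuous f} ->
  (\int[lebesgue_measure]_(t in `[0%R, +oo[) ((`|f t| `^ p)%:E) <= (c `^ p)%:E)%E ->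
  exists2 s, a <= s <= a + L & `|f s| <= c * L `^ (- p^-1).
Proof.
move=> p0 a0 L0 c0 cf int_le.
have aL : a <= a + L by rewrite lerDl ltW.
have window_sub : `[a, a + L] `<=` `[0%R, +oo[.
  by move=> t; rewrite /= !in_itv /= andbT => /andP[/(le_trans a0)].
have [s s_in s_min] := EVT_min aL
  (continuous_subspaceW window_sub (within_continuous_norm cf)).
exists s; first by move: s_in; rewrite in_itv.
apply: le_root_of_powR_mul_le => //; rewrite -lee_fin; apply: le_trans int_le.
have ->: ((`|f s| `^ p * L)%:E =
    \int[lebesgue_measure]_(t in `[a, (a + L)%R]) (`|f s| `^ p)%:E)%E.
  rewrite integral_cst //= lebesgue_measure_itv /= lte_fin ltrDl L0.
  by rewrite -EFinD -EFinM addrAC subrr add0r.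
have mf := measurable_powR_norm p (measurable_itv _) cf.
have f0 t : `[0%R, +oo[%classic t -> (0 <= (`|f t| `^ p)%:E)%E.
  by rewrite lee_fin powR_ge0.
apply: (le_trans _ (ge0_subset_integral lebesgue_measure _ _ mf f0 window_sub)) => //.
apply: ge0_le_integral => //; first exact: measurable_funS mf.
move=> t t_in; rewrite lee_fin ge0_ler_powR ?nnegrE ?(ltW p0) //.
exact: s_min.
Qed.

Lemma integral_exponential_density {R : realType} {c : R} : 0 < c ->
  (\int[lebesgue_measure]_(t in `[0%R, +oo[) (c * expR (- c * t))%:E = 1)%E.
Proof.
move=> c0; rewrite -(integral_exponential_pdf c0) integral_mkcond.
by apply: eq_integral => x _; rewrite /exponential_pdf /patch /=; case: ifP.
Qed.

Lemma ULES_Lp_bound {R : realType} {X : normedModType R} {Q : Type}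
    {S : set (R -> Q)} {phi : R -> X -> (R -> Q) -> X} :
  (forall x sigma, S sigma -> {within `[0, +oo[, continuous (fun t => phi t x sigma)}) ->
  ULES S phi ->
  forall p : R, 0 < p -> exists (k : R -> R) (Rad : R),
    [/\ nondecr_nonneg k, 0 < Rad &
        forall x sigma, `|x| <= Rad -> S sigma -> Lp_bound phi p k x sigma].
Proof.
move=> phi_cont [Rad [M [lam [Rad0 M0 lam0 decay]]]] p p0.
pose c := lam * p.
have c0 : 0 < c by rewrite mulr_gt0.
pose K := M * c `^ (- p^-1).
exists (fun=> K), Rad; split => //.
  by split=> [r _|r s _ _]; rewrite ?lexx // mulr_ge0 ?powR_ge0 ?ltW.
move=> x sigma xRad Ssigma; rewrite /Lp_bound.
pose A := M `^ p * `|x| `^ p / c.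
have mexp :
    measurable_fun (`[0%R, +oo[ : set R) (fun t : R => (c * expR (- c * t))%:E).
  by apply/measurable_EFinP/measurable_funTS/measurable_funM => //;
     apply/measurableT_comp/measurable_funM.
(* (M e^{-lam t} |x|)^p = A * (c e^{-ct}) with c = lam p *)
apply: (@le_trans _ _ (\int[lebesgue_measure]_(t in `[0%R, +oo[)
    (A%:E * (c * expR (- c * t))%:E))%E).
  apply: ge0_le_integral => //.
  - exact: measurable_powR_norm (measurable_itv _) (phi_cont _ _ Ssigma).
  - exact: emeasurable_funM.
  move=> t; rewrite /= in_itv /= andbT => t0.
  rewrite -EFinM lee_fin.
  apply: le_trans (ge0_ler_powR (ltW p0) _ _ (decay t x sigma t0 xRad Ssigma)) _.
  + by rewrite nnegrE.
  + by rewrite nnegrE !mulr_ge0 ?expR_ge0 // ltW.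
  rewrite !powRM ?mulr_ge0 ?expR_ge0 ?(ltW M0) // -expRM /A /c.
  have -> : - (lam * p) * t = - lam * t * p by ring.
  by rewrite mulrA divfK ?gt_eqF // mulrAC.
rewrite ge0_integralZl_EFin //; last 2 first.
- by move=> t /= t0; rewrite lee_fin mulr_ge0 ?expR_ge0 ?ltW.
- by rewrite /A divr_ge0 ?mulr_ge0 ?powR_ge0 ?ltW.
rewrite integral_exponential_density // mule1 lee_fin /A /K.
rewrite powRM ?powR_ge0 ?(ltW M0) // -powRrM mulNr mulVf ?gt_eqF //.
by rewrite powR_inv1 ?(ltW c0) // mulrAC.
Qed.

Section Converse.
Context {R : realType} {X : normedModType R} {Q : Type}
  {S : set (R -> Q)} {phi : R -> X -> (R -> Q) -> X}.
Hypothesis S_shift : shift_closed S.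
Hypothesis phi_cocycle : forall t tau x sigma, 0 <= t -> 0 <= tau -> S sigma ->
  phi tau (phi t x sigma) (tshift t sigma) = phi (t + tau) x sigma.

Lemma phi_split t s x sigma : 0 <= s <= t -> S sigma ->
  phi t x sigma = phi (t - s) (phi s x sigma) (tshift s sigma).
Proof.
by move=> /andP[s0 st] Ssigma; rewrite phi_cocycle ?subr_ge0 // addrC subrK.
Qed.

(* Iterating the contraction over the windows [nT, (n+1)T] gives the rate 1/T. *)
Lemma ULES_of_bounded_contraction (r K T : R) : 0 < r -> 0 < K -> 0 < T ->
  (forall t x sigma, 0 <= t -> `|x| <= r -> S sigma ->
     `|phi t x sigma| <= K * `|x|) ->
  (forall x sigma, `|x| <= r -> S sigma ->
     `|phi T x sigma| <= expR (-1) * `|x|) ->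
  ULES S phi.
Proof.
move=> r0 K0 T0 bounded contract.
pose envelope t := K * expR 1 * expR (- (t / T)).
have decay_before n : forall t x sigma, 0 <= t -> t < n.+1%:R * T ->
    `|x| <= r -> S sigma -> `|phi t x sigma| <= envelope t * `|x|.
  elim: n => [|n IHn] t x sigma t0 tn xr Ssigma.
    apply: le_trans (bounded t x sigma t0 xr Ssigma) _.
    apply: ler_wpM2r => //.
    rewrite /envelope -mulrA -expRD ler_peMr ?(ltW K0) //.
    by rewrite -[leLHS]expR0 ler_expR subr_ge0 ler_pdivrMr // ltW.
  have [tT|Tt] := ltrP t T.
    by apply: IHn => //; apply: lt_le_trans tT _; rewrite ler_peMl ?ler1n ?ltW.
  have expN1_le1 : expR (-1) <= 1 :> R by rewrite -[leRHS]expR0 ler_expR lerN10.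
  have yr : `|phi T x sigma| <= r.
    apply: le_trans (contract x sigma xr Ssigma) (le_trans _ xr).
    exact: ler_piMl.
  rewrite (@phi_split t T) ?Tt ?(ltW T0) //.
  apply: le_trans (IHn _ _ _ _ _ yr (S_shift _ _ Ssigma (ltW T0))) _.
  - by rewrite subr_ge0.
  - by move: tn; rewrite -addn1 natrD mulrDl mul1r ltrBlDr.
  apply: le_trans (ler_wpM2l _ (contract x sigma xr Ssigma)) _.
    by rewrite /envelope !mulr_ge0 ?expR_ge0 ?ltW.
  rewrite mulrA /envelope -[_ * expR (-1)]mulrA -expRD.
  by rewrite mulrBl divff ?gt_eqF // opprB addrAC subrr add0r.
exists r, (K * expR 1), T^-1; split; rewrite ?invr_gt0 ?mulr_gt0 ?expR_gt0 //.
move=> t x sigma t0 xr Ssigma.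
have [n tn] : exists n : nat, t / T < n%:R.
  by exists (Num.bound (t / T)); apply: archi_boundP; rewrite divr_ge0 // ltW.
apply: le_trans (decay_before n t x sigma t0 _ xr Ssigma) _.
  rewrite -ltr_pdivrMr //; apply: lt_le_trans tn _.
  by rewrite ler_nat.
by rewrite /envelope mulNr [t / T]mulrC.
Qed.

Hypothesis phi_cont : forall x sigma, S sigma ->
  {within `[0, +oo[, continuous (fun t => phi t x sigma)}.
Context {p : R} {k : R -> R} {Rad : R}.
Hypotheses (p_gt0 : 0 < p) (k_nondecr : nondecr_nonneg k) (Rad_gt0 : 0 < Rad).
Hypothesis phi_Lp : forall x sigma, `|x| <= Rad -> S sigma -> Lp_bound phi p k x sigma.

Lemma Lp_window x sigma a len : `|x| <= Rad -> S sigma -> 0 <= a -> 0 < len ->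
  exists2 s, a <= s <= a + len &
    `|phi s x sigma| <= k Rad * `|x| * len `^ (- p^-1).
Proof.
move=> xRad Ssigma a0 len0; have [k_ge0 k_mono] := k_nondecr.
have := phi_Lp x sigma xRad Ssigma; rewrite /Lp_bound -powRM ?k_ge0 // => int_le.
have [s s_in small] := Lp_integral_small_in_window a len p_gt0 a0 len0
  (mulr_ge0 (k_ge0 _ (normr_ge0 _)) (normr_ge0 _)) (phi_cont x sigma Ssigma) int_le.
exists s => //; apply: le_trans small _.
apply: ler_wpM2r; first exact: powR_ge0.
by apply: ler_wpM2r => //; apply: k_mono.
Qed.

Context {t1 L delta : R}.
Hypotheses (t1_gt0 : 0 < t1) (L_ge0 : 0 <= L) (delta_gt0 : 0 < delta).
Hypothesis phi_linear_short : forall t x sigma, 0 <= t <= t1 -> `|x| <= delta ->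
  S sigma -> `|phi t x sigma| <= L * `|x|.

(* After time t1 the L^p bound provides, within the last t1 time units, an
   instant where the state is O(|x|); the short-time bound takes over from there. *)
Lemma Lp_uniformly_stable : exists r K, [/\ 0 < r, r <= Rad, 1 <= K &
  forall t x sigma, 0 <= t -> `|x| <= r -> S sigma -> `|phi t x sigma| <= K * `|x|].
Proof.
have [k_ge0 _] := k_nondecr.
pose E := 1 + k Rad * t1 `^ (- p^-1).
have E1 : 1 <= E by rewrite lerDl mulr_ge0 ?k_ge0 ?powR_ge0 ?(ltW Rad_gt0).
have E0 : 0 < E := lt_le_trans ltr01 E1.
exists (Order.min Rad (delta / E)), (L * E + 1); split.
- by rewrite lt_min Rad_gt0 divr_gt0.
- by rewrite ge_min lexx.
- by rewrite lerDr mulr_ge0 ?(ltW E0).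
move=> t x sigma t0; rewrite le_min ler_pdivlMr // => /andP[xRad xE] Ssigma.
have xdelta : `|x| <= delta by apply: le_trans xE; rewrite ler_peMr.
suff : `|phi t x sigma| <= L * (E * `|x|).
  by move/le_trans; apply; rewrite mulrA; apply: ler_wpM2r => //; rewrite lerDl.
have [tt1|t1t] := lerP t t1.
  have t_short : 0 <= t <= t1 by rewrite t0 tt1.
  apply: le_trans (phi_linear_short t x sigma t_short xdelta Ssigma) _.
  by apply: ler_wpM2l => //; rewrite ler_peMl.
have tt1_ge0 : 0 <= t - t1 by rewrite subr_ge0 ltW.
have [s /andP[s_ge s_le] small] :=
  Lp_window x sigma (t - t1) t1 xRad Ssigma tt1_ge0 t1_gt0.
rewrite subrK in s_le.
have s0 : 0 <= s := le_trans tt1_ge0 s_ge.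
have smallE : `|phi s x sigma| <= E * `|x|.
  apply: le_trans small _; rewrite mulrAC.
  by apply: ler_wpM2r => //; rewrite lerDr.
rewrite (@phi_split t s) ?s0 ?s_le //.
have ts_short : 0 <= t - s <= t1 by rewrite subr_ge0 s_le lerBlDl -lerBlDr.
have y_delta : `|phi s x sigma| <= delta by rewrite (le_trans smallE) // mulrC.
apply: le_trans (phi_linear_short _ _ _ ts_short y_delta (S_shift _ _ Ssigma s0)) _.
exact: ler_wpM2l.
Qed.

(* Over a window of length T = (K (k Rad + 1) e)^p the L^p bound finds an
   instant where the state is at most |x| / (K e), and stability then keeps
   it within a factor K of that until time T. *)
Lemma Lp_contraction r K : r <= Rad -> 1 <= K ->
  (forall t x sigma, 0 <= t -> `|x| <= r -> S sigma -> `|phi t x sigma| <= K * `|x|) ->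
  exists2 T, 0 < T & forall x sigma, `|x| <= r / K -> S sigma ->
    `|phi T x sigma| <= expR (-1) * `|x|.
Proof.
move=> rRad K1 stable; have [k_ge0 _] := k_nondecr.
have K0 : 0 < K := lt_le_trans ltr01 K1.
have kR0 : 0 <= k Rad by rewrite k_ge0 ?ltW.
pose B := K * (k Rad + 1) * expR 1.
have B0 : 0 < B by rewrite !mulr_gt0 ?expR_gt0 ?ltr_wpDl.
have T0 : 0 < B `^ p by rewrite powR_gt0.
exists (B `^ p) => // x sigma; rewrite ler_pdivlMr // mulrC => Kxr Ssigma.
have xr : `|x| <= r by apply: le_trans Kxr; rewrite ler_peMl.
have [s /andP[s0 sT] small] :=
  Lp_window x sigma 0 (B `^ p) (le_trans xr rRad) Ssigma (lexx 0) T0.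
rewrite add0r in sT.
rewrite -powRrM mulrN divff ?gt_eqF // powR_inv1 ?(ltW B0) // in small.
have y_r : `|phi s x sigma| <= r := le_trans (stable s x sigma s0 xr Ssigma) Kxr.
rewrite (@phi_split (B `^ p) s) ?s0 ?sT //.
apply: le_trans (stable _ _ _ _ y_r (S_shift _ _ Ssigma s0)) _.
  by rewrite subr_ge0.
apply: le_trans (ler_wpM2l (ltW K0) small) _.
have -> : K * (k Rad * `|x| * B^-1) = k Rad / (k Rad + 1) * expR (-1) * `|x|.
  rewrite /B expRN; field.
  by rewrite !gt_eqF ?expR_gt0 ?ltr_wpDl.
apply: ler_wpM2r => //; apply: ler_piMl; first exact: expR_ge0.
by rewrite ler_pdivrMr ?mul1r ?lerDl ?ltr_wpDl.
Qed.

Lemma Lp_ULES : ULES S phi.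
Proof.
have [r [K [r0 rRad K1 stable]]] := Lp_uniformly_stable.
have [T T0 contract] := Lp_contraction _ _ rRad K1 stable.
have K0 : 0 < K := lt_le_trans ltr01 K1.
apply: (@ULES_of_bounded_contraction (r / K) K T) => //.
- exact: divr_gt0.
- move=> t x sigma t0 xr; apply: stable => //; apply: le_trans xr _.
  by rewrite ler_pdivrMr // ler_peMr // ltW.
Qed.

End Converse.

Lemma linear_bound_near0 {R : realType} {beta : R -> R} :
  beta 0 = 0 -> limsup_ratio_finite beta ->
  exists C delta, [/\ 0 <= C, 0 < delta &
    forall r, 0 <= r <= delta -> beta r <= C * r].
Proof.
move=> beta0 [C [del [del0 ratio_le]]].
exists `|C|, (del / 2); split; rewrite ?divr_gt0 //.
move=> r /andP[]; rewrite le_eqVlt => /orP[/eqP <-|r0 rdel].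
  by rewrite beta0 mulr0.
have /ratio_le : 0 < r < del.
  by rewrite r0 (le_lt_trans rdel) // ltr_pdivrMr // ltr_pMr // ltr1n.
rewrite ler_pdivrMr // => /le_trans; apply.
by apply: ler_wpM2r; rewrite ?(ltW r0) ?ler_norm.
Qed.

Theorem theorem1 (R : realType) (X : completeNormedModType R) (Q : Type)
  (S : set (R -> Q)) (phi : R -> X -> (R -> Q) -> X)
  (t1 G0 : R) (beta : R -> R) :
  inhabited Q ->
  shift_closed S -> concat_closed S ->
  fc_dynamical_system S phi ->
  0 < t1 -> 0 < G0 ->
  class_Kinf beta -> limsup_ratio_finite beta ->
  (forall t x sigma, 0 <= t <= t1 -> S sigma ->
     `|phi t x sigma| <= G0 * beta `|x|) ->
  [/\ (ULES S phi ->
         forall p : R, 0 < p -> exists (k : R -> R) (Rad : R),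
           [/\ nondecr_nonneg k, 0 < Rad &
               forall x sigma, `|x| <= Rad -> S sigma -> Lp_bound phi p k x sigma]),
      ((forall p : R, 0 < p -> exists (k : R -> R) (Rad : R),
           [/\ nondecr_nonneg k, 0 < Rad &
               forall x sigma, `|x| <= Rad -> S sigma -> Lp_bound phi p k x sigma]) ->
         exists (p : R) (k : R -> R) (Rad : R),
           [/\ 0 < p, nondecr_nonneg k, 0 < Rad &
               forall x sigma, `|x| <= Rad -> S sigma -> Lp_bound phi p k x sigma]) &
      ((exists (p : R) (k : R -> R) (Rad : R),
           [/\ 0 < p, nondecr_nonneg k, 0 < Rad &
               forall x sigma, `|x| <= Rad -> S sigma -> Lp_bound phi p k x sigma]) ->
         ULES S phi)].
Proof.
move=> _ S_shift _ [_ _ phi_cont phi_cocycle] t1_gt0 G0_gt0 [_ _ beta0 _ _]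
  beta_ratio phi_short.
split.
- exact: ULES_Lp_bound.
- move=> all_p; have [k [Rad [k_nondecr Rad_gt0 phi_Lp]]] := all_p 1 ltr01.
  by exists 1, k, Rad.
move=> [p [k [Rad [p_gt0 k_nondecr Rad_gt0 phi_Lp]]]].
have [C [delta [C_ge0 delta_gt0 beta_linear]]] := linear_bound_near0 beta0 beta_ratio.
have phi_linear_short t x sigma : 0 <= t <= t1 -> `|x| <= delta -> S sigma ->
    `|phi t x sigma| <= G0 * C * `|x|.
  move=> t_short x_delta Ssigma.
  apply: le_trans (phi_short t x sigma t_short Ssigma) _; rewrite -mulrA.
  by apply: ler_wpM2l; [exact: ltW | apply: beta_linear; rewrite normr_ge0].
exact: (Lp_ULES S_shift phi_cocycle phi_cont p_gt0 k_nondecr Rad_gt0 phi_Lp t1_gt0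
  (mulr_ge0 (ltW G0_gt0) C_ge0) delta_gt0 phi_linear_short).
Qed.
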